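(* Let $d\ge 3$, integer $\nu\ge 1$, $s>0$, $z\ge 0$. The function $$\zeta(\lambda_1,\dots,\lambda_\nu)=\frac{\prod_{i=1}^\nu\lambda_i^{d/2-2}}{(\sum_{i=1}^\nu\lambda_i+s)^{d/2}}\exp\!\left(-\frac{\sum_i\lambda_i}{\sum_i\lambda_i+s}\,z\right),\qquad \lambda\in(0,\infty)^\nu,$$ is multivariate totally positive of order two (MTP2), i.e. $\zeta(\lambda)\zeta(\xi)\le\zeta(\lambda\vee\xi)\zeta(\lambda\wedge\xi)$ for all $\lambda,\xi\in(0,\infty)^\nu$, where $\vee,\wedge$ denote componentwise maximum and minimum. *)

From Stdlib Require Import Reals.
Open Scope R_scope.

(* Sum and product of f 0, ..., f (n-1); vectors in (0,oo)^nu are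
   represented as functions nat -> R, only indices i < nu matter. *)
Fixpoint rsum (n : nat) (f : nat -> R) : R :=
  match n with O => 0 | S k => rsum k f + f k end.

Fixpoint rprod (n : nat) (f : nat -> R) : R :=
  match n with O => 1 | S k => rprod k f * f k end.

Definition zeta (d : R) (nu : nat) (s z : R) (lam : nat -> R) : R :=
  let S := rsum nu lam in
  rprod nu (fun i => Rpower (lam i) (d / 2 - 2)) / Rpower (S + s) (d / 2)
  * exp (- (S / (S + s)) * z).

Definition vmax (lam xi : nat -> R) : nat -> R := fun i => Rmax (lam i) (xi i).
Definition vmin (lam xi : nat -> R) : nat -> R := fun i => Rmin (lam i) (xi i).

(* The factor prod_i lambda_i^(d/2-2) is multiplicative across coordinates, so
   it takes the same value on (lambda, xi) as on (lambda v xi, lambda ^ xi).  The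
   rest depends on lambda only through T = sum_i lambda_i + s.  Passing to the
   join and the meet keeps T_v + T_^ = T_lambda + T_xi while T_^ <= T_lambda, T_xi,
   so the pair moves apart and T_v T_^ <= T_lambda T_xi.  Both T^(-d/2) and
   exp(-(1 - s/T) z) = exp(-z) exp(s z / T) only gain from a smaller product at a
   fixed sum. *)

From Stdlib Require Import Reals Lra Psatz.
Open Scope R_scope.

Lemma rsum_ext n f g :
  (forall i, (i < n)%nat -> f i = g i) -> rsum n f = rsum n g.
Proof. induction n as [|n IH]; intros Hfg; simpl; auto. rewrite IH, Hfg; auto. Qed.

Lemma rprod_ext n f g :
  (forall i, (i < n)%nat -> f i = g i) -> rprod n f = rprod n g.
Proof. induction n as [|n IH]; intros Hfg; simpl; auto. rewrite IH, Hfg; auto. Qed.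

Lemma rsum_add n f g : rsum n f + rsum n g = rsum n (fun i => f i + g i).
Proof. induction n as [|n IH]; simpl; [ring | rewrite <- IH; ring]. Qed.

Lemma rprod_mul n f g : rprod n f * rprod n g = rprod n (fun i => f i * g i).
Proof. induction n as [|n IH]; simpl; [ring | rewrite <- IH; ring]. Qed.

Lemma rsum_le n f g :
  (forall i, (i < n)%nat -> f i <= g i) -> rsum n f <= rsum n g.
Proof.
  induction n as [|n IH]; intros Hfg; simpl; [lra|].
  apply Rplus_le_compat; auto.
Qed.

Lemma rsum_nonneg n f : (forall i, (i < n)%nat -> 0 <= f i) -> 0 <= rsum n f.
Proof.
  induction n as [|n IH]; intros Hf; simpl; [lra|].
  apply Rplus_le_le_0_compat; auto.
Qed.

Lemma rprod_pos n f : (forall i, 0 < f i) -> 0 < rprod n f.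
Proof. intros Hf; induction n; simpl; [lra | apply Rmult_lt_0_compat; auto]. Qed.

Lemma Rmax_Rmin_comm_op (op : R -> R -> R) (g : R -> R) a b :
  (forall x y, op x y = op y x) -> op (g (Rmax a b)) (g (Rmin a b)) = op (g a) (g b).
Proof. intros Hop; unfold Rmax, Rmin; destruct (Rle_dec a b); auto. Qed.

Lemma rsum_vmax_vmin n lam xi :
  rsum n (vmax lam xi) + rsum n (vmin lam xi) = rsum n lam + rsum n xi.
Proof.
  rewrite !rsum_add; apply rsum_ext; intros i _.
  exact (Rmax_Rmin_comm_op Rplus id _ _ Rplus_comm).
Qed.

Lemma rprod_vmax_vmin n (g : R -> R) lam xi :
  rprod n (fun i => g (vmax lam xi i)) * rprod n (fun i => g (vmin lam xi i))
  = rprod n (fun i => g (lam i)) * rprod n (fun i => g (xi i)).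
Proof.
  rewrite !rprod_mul; apply rprod_ext; intros i _.
  exact (Rmax_Rmin_comm_op Rmult g _ _ Rmult_comm).
Qed.

Lemma Rmult_le_of_spread a b c e :
  a + b = c + e -> a <= c -> a <= e -> a * b <= c * e.
Proof. intros Hsum Hc He; replace b with (c + e - a) by lra; nra. Qed.

Lemma Rinv_sum_le_of_spread a b c e :
  0 < a -> 0 < b -> 0 < c -> 0 < e -> a + b = c + e -> c * e <= a * b ->
  / a + / b <= / c + / e.
Proof.
  intros Ha Hb Hc He Hsum Hprod.
  replace (/ a + / b) with ((a + b) * / (a * b)) by (field; lra).
  replace (/ c + / e) with ((a + b) * / (c * e)) by (rewrite Hsum; field; lra).
  apply Rmult_le_compat_l; [lra|].
  apply Rinv_le_contravar; nra.
Qed.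

Lemma exp_le_compat a b : a <= b -> exp a <= exp b.
Proof. intros [Hlt | ->]; [left; apply exp_increasing, Hlt | right; reflexivity]. Qed.

Definition zeta_radial (d s z S : R) : R :=
  / Rpower (S + s) (d / 2) * exp (- (S / (S + s)) * z).

Lemma zeta_mul d nu s z lam xi :
  zeta d nu s z lam * zeta d nu s z xi =
  rprod nu (fun i => Rpower (lam i) (d / 2 - 2)) * rprod nu (fun i => Rpower (xi i) (d / 2 - 2))
  * (zeta_radial d s z (rsum nu lam) * zeta_radial d s z (rsum nu xi)).
Proof. unfold zeta, zeta_radial, Rdiv; ring. Qed.

Lemma zeta_radial_mul d s z a b :
  0 < a + s -> 0 < b + s ->
  zeta_radial d s z a * zeta_radial d s z b =
  / Rpower ((a + s) * (b + s)) (d / 2) * exp (z * s * (/ (a + s) + / (b + s)) - 2 * z).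
Proof.
  intros Ha Hb; unfold zeta_radial.
  rewrite <- Rpower_mult_distr, Rinv_mult by lra.
  replace (z * s * (/ (a + s) + / (b + s)) - 2 * z)
    with (- (a / (a + s)) * z + - (b / (b + s)) * z) by (field; lra).
  rewrite exp_plus; ring.
Qed.

Lemma zeta_radial_spread d s z Sl Sx Sv Sw :
  0 <= d -> 0 < s -> 0 <= z -> 0 <= Sw ->
  Sv + Sw = Sl + Sx -> Sw <= Sl -> Sw <= Sx ->
  zeta_radial d s z Sl * zeta_radial d s z Sx
  <= zeta_radial d s z Sv * zeta_radial d s z Sw.
Proof.
  intros Hd Hs Hz HSw Hsum Hl Hx.
  assert (Hprod : (Sw + s) * (Sv + s) <= (Sl + s) * (Sx + s))
    by (apply Rmult_le_of_spread; lra).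
  rewrite !zeta_radial_mul by lra.
  apply Rmult_le_compat.
  - left; apply Rinv_0_lt_compat, exp_pos.
  - left; apply exp_pos.
  - apply Rinv_le_contravar; [apply exp_pos|].
    apply Rle_Rpower_l; [lra | split; nra].
  - apply exp_le_compat, Rplus_le_compat_r, Rmult_le_compat_l; [nra|].
    rewrite (Rplus_comm (/ (Sv + s))).
    apply Rinv_sum_le_of_spread; nra.
Qed.

Theorem lemma3 (d : R) (nu : nat) (s z : R)
  (hd : 3 <= d) (hnu : (1 <= nu)%nat) (hs : 0 < s) (hz : 0 <= z)
  (lam xi : nat -> R)
  (hlam : forall i, (i < nu)%nat -> 0 < lam i)
  (hxi : forall i, (i < nu)%nat -> 0 < xi i) :
  zeta d nu s z lam * zeta d nu s z xi
  <= zeta d nu s z (vmax lam xi) * zeta d nu s z (vmin lam xi).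
Proof.
  rewrite !zeta_mul, (rprod_vmax_vmin nu (fun x => Rpower x (d / 2 - 2))).
  apply Rmult_le_compat_l.
  { left; apply Rmult_lt_0_compat; apply rprod_pos; intros; apply exp_pos. }
  apply zeta_radial_spread; try lra.
  - apply rsum_nonneg; intros i Hi; left; apply Rmin_pos; auto.
  - apply rsum_vmax_vmin.
  - apply rsum_le; intros; apply Rmin_l.
  - apply rsum_le; intros; apply Rmin_r.
Qed.
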